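(* Let $X$ be a real Hilbert space with closed unit ball $\mathcal B$, $\Omega\subseteq X$ a closed symmetric convex set, $V\subseteq X$ a subspace, and $R,Z,\lambda\ge1$. If (i) $\mathcal B/V\subseteq R(\Omega\cap\mathcal B)/V$ and (ii) $\Omega\cap V\subseteq Z\mathcal B$, then $(\Omega+\lambda\mathcal B)\cap V\subseteq Z(3R\lambda+1)\mathcal B$.
   Context: For $A\subseteq X$, $A/V=\{a+V:a\in A\}$; (i) means every element of $\mathcal B$ differs by an element of $V$ from some element of $R(\Omega\cap\mathcal B)$. *)

From HB Require Import structures.
From mathcomp Require Import all_boot all_order all_algebra.
From mathcomp Require Import all_classical all_reals all_analysis.
Set Implicit Arguments. Unset Strict Implicit. Unset Printing Implicit Defensive.
Import Order.TTheory GRing.Theory Num.Theory.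
Import numFieldNormedType.Exports.
Local Open Scope classical_set_scope.
Local Open Scope ring_scope.

(* A real Hilbert space: a complete normed space over the reals whose norm
   is induced by an inner product [inner] (symmetric, bilinear, with
   ||x||^2 = <x,x>; positive-definiteness follows from the norm). *)
Definition hilbert_inner (R : realType) (X : completeNormedModType R)
  (inner : X -> X -> R) : Prop :=
  [/\ (forall x y, inner x y = inner y x),
      (forall a x y z, inner (a *: x + y) z = a * inner x z + inner y z)
    & (forall x, `|x| ^+ 2 = inner x x)].

Definition unit_ball (R : realType) (X : normedModType R) : set X :=
  [set x | `|x| <= 1].

Definition scale_set (R : realType) (X : normedModType R) (t : R) (A : set X)
  : set X := [set t *: a | a in A].

Definition minkowski_sum (R : realType) (X : normedModType R) (A B : set X)
  : set X := [set a + b | a in A & b in B].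

Definition symmetric_set (R : realType) (X : normedModType R) (A : set X) :=
  forall x, A x -> A (- x).

Definition convex_set' (R : realType) (X : normedModType R) (A : set X) :=
  forall x y (t : R), A x -> A y -> 0 <= t -> t <= 1 ->
    A (t *: x + (1 - t) *: y).

Definition lin_subspace (R : realType) (X : normedModType R) (V : set X) :=
  V 0 /\ forall (a : R) x y, V x -> V y -> V (a *: x + y).

(* A/V included in B/V: every a in A differs by an element of V from some b in B *)
Definition quot_subset (R : realType) (X : normedModType R) (V A B : set X) :=
  forall a, A a -> exists2 b, B b & V (a - b).
Arguments unit_ball {R} X.

From HB Require Import structures.
From mathcomp Require Import all_boot all_order all_algebra.
From mathcomp Require Import all_classical all_reals all_analysis.
From mathcomp Require Import ring lra.
Set Implicit Arguments. Unset Strict Implicit. Unset Printing Implicit Defensive.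
Import Order.TTheory GRing.Theory Num.Theory.
Import numFieldNormedType.Exports.
Local Open Scope classical_set_scope.
Local Open Scope ring_scope.

(* Let x = w + lam b lie in V, with w in Omega and |b| <= 1.
   By (i), b = Rc u + v with u in Omega, |u| <= 1 and v in V; hence
   |v| <= 1 + Rc.  The point y := w + (lam Rc) u = x - lam v lies in V, and
   y / (1 + lam Rc) is a convex combination of w and u, so it lies in
   Omega and in V; by (ii) its norm is at most Z, i.e.
   |y| <= (1 + lam Rc) Z.  Then
     |x| <= |y| + lam |v| <= Z (1 + lam Rc) + lam (1 + Rc) <= Z (3 Rc lam + 1).
   The argument only uses the normed-space structure, convexity of Omega
   and linearity of V. *)

Section NormedSpaceFacts.
Variables (R : realType) (X : normedModType R).

Lemma scale_ball_norm (t : R) (x : X) :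
  0 <= t -> scale_set t (unit_ball X) x -> `|x| <= t.
Proof.
move=> t0 [a Ba <-]; rewrite normrZ ger0_norm //.
by rewrite -[leRHS]mulr1 ler_wpM2l.
Qed.

Lemma norm_scale_ball (t : R) (x : X) :
  0 < t -> `|x| <= t -> scale_set t (unit_ball X) x.
Proof.
move=> t0 nx; exists (t^-1 *: x); last by rewrite scalerA mulfV ?gt_eqF // scale1r.
rewrite /unit_ball /= normrZ ger0_norm; last by rewrite invr_ge0 ltW.
by rewrite ler_pdivrMl // mulr1.
Qed.

Lemma lin_subspaceD (V : set X) (x y : X) :
  lin_subspace V -> V x -> V y -> V (x + y).
Proof. by move=> [_ Vlin] Vx Vy; rewrite -[x]scale1r; apply: Vlin. Qed.

Lemma lin_subspaceZ (V : set X) (a : R) (x : X) :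
  lin_subspace V -> V x -> V (a *: x).
Proof. by move=> [V0 Vlin] Vx; rewrite -[a *: x]addr0; apply: Vlin. Qed.

Lemma convex_normalized_comb (Omega : set X) (w u : X) (s : R) :
  convex_set' Omega -> Omega w -> Omega u -> 0 <= s ->
  Omega ((1 + s)^-1 *: (w + s *: u)).
Proof.
move=> Hconv Ow Ou s0; have c0 : 0 < 1 + s by lra.
have -> : (1 + s)^-1 *: (w + s *: u)
          = (1 + s)^-1 *: w + (1 - (1 + s)^-1) *: u.
  rewrite scalerDr scalerA; congr (_ + _ *: _).
  by field; rewrite gt_eqF.
apply: Hconv => //; first by rewrite invr_ge0 ltW.
by rewrite invr_le1 ?unitfE ?gt_eqF //; lra.
Qed.

Lemma scaled_norm_bound (Omega V : set X) (Z c : R) (y : X) :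
  Omega `&` V `<=` scale_set Z (unit_ball X) -> 0 <= Z -> 0 < c ->
  Omega (c^-1 *: y) -> V (c^-1 *: y) -> `|y| <= c * Z.
Proof.
move=> HOV Z0 c0 Oy Vy.
have nz := scale_ball_norm Z0 (HOV _ (conj Oy Vy)).
rewrite -[y](scalerKV (lt0r_neq0 c0)) normrZ ger0_norm; last exact: ltW.
by rewrite ler_pM2l.
Qed.

Lemma ball_decomposition (Omega V : set X) (Rc : R) (b : X) :
  quot_subset V (unit_ball X) (scale_set Rc (Omega `&` unit_ball X)) ->
  0 <= Rc -> `|b| <= 1 ->
  exists u v, [/\ Omega u, `|u| <= 1, V v, `|v| <= 1 + Rc & b = Rc *: u + v].
Proof.
move=> Hq Rc0 nb; have [_ [u [Ou Bu] <-] Vv] := Hq b nb.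
exists u, (b - Rc *: u); split => //; last by rewrite addrC subrK.
rewrite (le_trans (ler_normB _ _)) // normrZ ger0_norm //.
by rewrite lerD // -[leRHS]mulr1 ler_wpM2l.
Qed.

End NormedSpaceFacts.

Lemma final_estimate (R : realType) (Rc Z lam : R) :
  1 <= Rc -> 1 <= Z -> 1 <= lam ->
  (1 + lam * Rc) * Z + lam * (1 + Rc) <= Z * (3 * Rc * lam + 1).
Proof.
move=> HR HZ Hl; have p1 : 1 <= lam * Rc by nra.
have h1 : lam <= Z * (lam * Rc) by nra.
have h2 : lam * Rc <= Z * (lam * Rc) by nra.
nra.
Qed.

Theorem lemma9p11 (R : realType) (X : completeNormedModType R)
  (inner : X -> X -> R) (Omega V : set X) (Rc Z lam : R) :
  hilbert_inner inner ->
  closed Omega -> symmetric_set Omega -> convex_set' Omega ->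
  lin_subspace V ->
  1 <= Rc -> 1 <= Z -> 1 <= lam ->
  quot_subset V (unit_ball X) (scale_set Rc (Omega `&` unit_ball X)) ->
  Omega `&` V `<=` scale_set Z (unit_ball X) ->
  minkowski_sum Omega (scale_set lam (unit_ball X)) `&` V
    `<=` scale_set (Z * (3 * Rc * lam + 1)) (unit_ball X).
Proof.
move=> _ _ _ Hconv HV HR HZ Hl Hq HOV _ [[w Ow [_ [b Bb <-] <-]] Vx].
have Rc0 : 0 <= Rc by lra.
have p1 : 1 <= lam * Rc by apply: mulr_ege1.
have [u [v [Ou Bu Vv nv Eb]]] := ball_decomposition Hq Rc0 Bb.
set y := w + (lam * Rc) *: u.
have Ex : w + lam *: b = y + lam *: v.
  by rewrite /y Eb scalerDr scalerA addrA.
have Vy : V y.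
  rewrite -[y](addrK (lam *: v)) -Ex -scaleNr.
  by apply: lin_subspaceD => //; apply: lin_subspaceZ.
have ny : `|y| <= (1 + lam * Rc) * Z.
  apply: scaled_norm_bound HOV _ _ _ _; [lra | lra | |].
  - by apply: convex_normalized_comb => //; lra.
  - exact: lin_subspaceZ.
apply: norm_scale_ball; first by apply: mulr_gt0; lra.
rewrite Ex (le_trans (ler_normD _ _)) // normrZ ger0_norm; last lra.
apply: le_trans (final_estimate HR HZ Hl).
by rewrite lerD // ler_pM2l //; lra.
Qed.
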